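(* Let $T$ be a forest with no isolated vertices and no open twins. Then $T$ is an iso-unique Grundy total domination graph if and only if $\gamma_{gr}^{t}(T)=n(T)$, where $n(T)$ is the number of vertices of $T$.
   Context: For a graph $G$, $N(v)$ denotes the open neighborhood of $v$. A sequence $(v_1,\ldots,v_k)$ of distinct vertices is an open neighborhood sequence if $N(v_i)\setminus\bigcup_{j=1}^{i-1}N(v_j)\neq\emptyset$ for each $i\in[k]$. The Grundy total domination number $\gamma_{gr}^{t}(G)$ is the maximum length of an open neighborhood sequence; the vertex set of such a maximum-length sequence is a Grundy total dominating set. $G$ is an iso-unique Grundy total domination graph if for every two Grundy total dominating sets $A,B$ there is an automorphism $\phi$ of $G$ with $\phi(A)=B$. Two distinct vertices $u,v$ are open twins if $N(u)=N(v)$; a vertex is an open twin if it has an open twin partner. *)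

(* A finite simple graph is a symmetric irreflexive
   relation e on a finType T. *)
From mathcomp Require Import all_boot all_fingroup.
Set Implicit Arguments. Unset Strict Implicit. Unset Printing Implicit Defensive.

Section Graph.
Variables (T : finType) (e : rel T).

Definition nbhd (v : T) : {set T} := [set u | e v u].

Definition forest : Prop :=
  forall s : seq T, uniq s -> 3 <= size s -> ~~ path.cycle e s.

Definition no_isolated : Prop := forall v : T, exists u, e v u.

Definition no_open_twins : Prop := forall u v : T, nbhd u = nbhd v -> u = v.

Fixpoint ons_from (D : {set T}) (s : seq T) : bool :=
  match s with
  | [::] => true
  | v :: s' => (nbhd v :\: D != set0) && ons_from (D :|: nbhd v) s'
  end.

Definition ons (s : seq T) : bool := uniq s && ons_from set0 s.

(* Grundy total domination number: maximum length of an ons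
   (ons have distinct vertices so length <= #|T|) *)
Definition gtd : nat :=
  \max_(k < #|T|.+1 | [exists t : k.-tuple T, ons t]) k.

Definition gtd_set (A : {set T}) : Prop :=
  exists s : seq T, [/\ ons s, size s = gtd & A = [set x in s]].

Definition graph_aut (phi : {perm T}) : Prop :=
  forall x y : T, e (phi x) (phi y) = e x y.

Definition iso_unique : Prop :=
  forall A B : {set T}, gtd_set A -> gtd_set B ->
    exists phi : {perm T}, graph_aut phi /\ phi @: A = B.

End Graph.

From mathcomp Require Import all_boot all_fingroup.
From mathcomp Require Import zify.
Set Implicit Arguments. Unset Strict Implicit. Unset Printing Implicit Defensive.

(* Say that S is an SDR set when the neighbourhoods N(v), v in S, have a system
   of distinct representatives f.  The vertex set of an open neighbourhood
   sequence is an SDR set (take the footprints).  Conversely, in a forest some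
   v in S has a representative f v adjacent to no other vertex of S, since
   otherwise alternating between vertices of S and their representatives would
   give an infinite non-backtracking walk; putting such a v last and recursing
   orders S as an open neighbourhood sequence.  So the Grundy total dominating
   sets are the maximum SDR sets, and these are closed under exchanges
   S - y + w.  If gamma = n they are all V.  If gamma < n, exchanges produce a
   maximum SDR set containing every leaf (a leaf cannot be swapped for a leaf,
   as there are no open twins) and one missing a leaf (otherwise the edges with
   an endpoint outside some maximum SDR set would again carry an infinite
   non-backtracking walk); automorphisms preserve leaves, so none maps the first
   set onto the second. *)


Section NonBacktrackingWalks.
Variables (T : finType) (e : rel T).
Hypotheses (e_irrefl : irreflexive e) (e_forest : forest e).

Lemma nonbacktracking_walk_inj (g : nat -> T) :
  (forall n, e (g n) (g n.+1)) -> (forall n, g n != g n.+2) -> injective g.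
Proof.
move=> g_edge g_nb.
suff not_closed d i : 0 < d -> g i != g (i + d).
  move=> i j; have [lt_ij | lt_ji | //] := ltngtP i j => /eqP; apply: contraTeq => _.
    by rewrite -(subnKC (ltnW lt_ij)) not_closed ?subn_gt0.
  by rewrite eq_sym -(subnKC (ltnW lt_ji)) not_closed ?subn_gt0.
elim/ltn_ind: d i => d IH i d_gt0; apply/eqP => g_closed.
pose s := mkseq (fun k => g (i + k)) d.
have size_s : size s = d by rewrite size_mkseq.
have [s_uniq | /(uniqPn (g 0)) [a [b [ab b_lt eq_ab]]]] := boolP (uniq s); last first.
  rewrite size_s in b_lt; rewrite !nth_mkseq // in eq_ab; last by lia.
  have /eqP[] := IH (b - a) ltac:(lia) (i + a) ltac:(lia).
  by rewrite eq_ab; congr g; lia.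
have d_ge3 : 2 < d.
  case: d IH d_gt0 g_closed {s size_s s_uniq} => [|[|[|d]]] // _ _.
  - by rewrite addn1 => g_i; have := g_edge i; rewrite -g_i e_irrefl.
  - by rewrite addn2 => g_i; have := g_nb i; rewrite -g_i eqxx.
have /negP[] := e_forest s_uniq (leq_trans d_ge3 (eq_leq (esym size_s))).
rewrite (cycle_path (g 0)); apply/(pathP (g 0)); rewrite size_s => k k_lt.
case: k k_lt => [|k] k_lt /=.
  rewrite (last_nth (g 0)) /= size_s -[d in nth _ _ d](prednK d_gt0) /=.
  rewrite !nth_mkseq ?addn0 ?g_closed; try lia.
  by rewrite (_ : i + d = (i + d.-1).+1); [apply: g_edge | lia].
by rewrite !nth_mkseq ?addnS; [apply: g_edge | lia..].
Qed.

Lemma forest_no_infinite_nonbacktracking_walk (g : nat -> T) :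
  (forall n, e (g n) (g n.+1)) -> (forall n, g n != g n.+2) -> False.
Proof.
move=> g_edge g_nb; have g_inj := nonbacktracking_walk_inj g_edge g_nb.
have /leq_card : injective (fun k : 'I_#|T|.+1 => g k) by move=> a b /g_inj/val_inj.
by rewrite card_ord ltnn.
Qed.

Lemma forest_no_nonbacktracking_rel (P : rel T) :
  subrel P e ->
  (forall a b, P a b -> exists c, [&& e b c, c != a & P b c]) ->
  forall a b, ~~ P a b.
Proof.
move=> P_sub P_ext a0 b0; apply/negP => P0.
pose next (p : T * T) : T * T :=
  if [pick c | [&& e p.2 c, c != p.1 & P p.2 c]] is Some c then (p.2, c) else p.
pose it n := iter n next (a0, b0).
have next_ext p : P p.1 p.2 ->
    [/\ (next p).1 = p.2, (next p).2 != p.1 & P (next p).1 (next p).2].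
  rewrite /next; case: pickP => [c /and3P[_ -> ->] //|none P_p].
  by have [c /and3P[ec ca Pc]] := P_ext _ _ P_p; have := none c; rewrite ec ca Pc.
have P_it n : P (it n).1 (it n).2.
  by elim: n => [|n IH] //=; have [_ _] := next_ext _ IH.
apply: (@forest_no_infinite_nonbacktracking_walk (fun n => (it n).1)) => n /=.
  by have [-> _ _] := next_ext _ (P_it n); apply: P_sub.
have [-> _ _] := next_ext (next (it n)) (P_it n.+1).
by have [_ ne _] := next_ext _ (P_it n); rewrite eq_sym.
Qed.

End NonBacktrackingWalks.

Section NeighbourhoodSDR.
Variables (T : finType) (e : rel T).

Definition nbhd_sdr (S : {set T}) : bool :=
  [exists f : {ffun T -> T}, [forall v in S, e v (f v)] &&
     [forall v in S, forall w in S, (f v == f w) ==> (v == w)]].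

Lemma nbhd_sdrP (S : {set T}) : reflect
  (exists f : T -> T, {in S, forall v, e v (f v)} /\ {in S &, injective f})
  (nbhd_sdr S).
Proof.
apply: (iffP existsP) => [[f /andP[/forall_inP f_edge /forall_inP f_inj]] | [f [f_edge f_inj]]].
  exists f; split=> // v w vS wS /eqP fvw.
  by apply/eqP; move: (f_inj v vS) => /forall_inP/(_ w wS)/implyP; apply.
exists (finfun f); apply/andP; split; apply/forall_inP => v vS; rewrite ?ffunE.
  exact: f_edge.
by apply/forall_inP => w wS; rewrite !ffunE; apply/implyP => /eqP/f_inj->.
Qed.

Lemma in_nbhd v u : (u \in nbhd e v) = e v u.
Proof. by rewrite inE. Qed.

Lemma ons_from_sdr D s : ons_from e D s -> exists f : T -> T,
  {in s, forall v, e v (f v) && (f v \notin D)} /\ {in s &, injective f}.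
Proof.
elim: s D => [|v s IH] D /=; first by exists id.
case/andP => /set0Pn[x]; rewrite in_setD in_nbhd => /andP[xD evx] /IH[f [f_edge f_inj]].
have f_new u : u \in s -> f u != x.
  move=> us; apply: contraTneq (f_edge u us) => ->.
  by rewrite in_setU in_nbhd evx orbT andbF.
exists (fun u => if u == v then x else f u); split.
  move=> u; rewrite in_cons; case: eqP => [-> _|_ /= us]; first by rewrite evx xD.
  by case/andP: (f_edge u us) => -> /=; rewrite in_setU negb_or => /andP[].
move=> u w; rewrite !in_cons.
case: (eqVneq u v) => [->|uv]; case: (eqVneq w v) => [->|wv] //= us ws.
- by move/esym/eqP; rewrite (negbTE (f_new w ws)).
- by move/eqP; rewrite (negbTE (f_new u us)).
- exact: f_inj.
Qed.

Lemma ons_nbhd_sdr s : ons e s -> nbhd_sdr [set x in s].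
Proof.
case/andP => _ /ons_from_sdr[f [f_edge f_inj]]; apply/nbhd_sdrP; exists f; split.
  by move=> v; rewrite inE => /f_edge/andP[].
by move=> v w; rewrite !inE; apply: f_inj.
Qed.

Lemma ons_from_rcons D s v : ons_from e D (rcons s v) =
  ons_from e D s && (nbhd e v :\: (D :|: \bigcup_(u <- s) nbhd e u) != set0).
Proof.
elim: s D => [|u s IH] D /=; first by rewrite big_nil setU0 andbT.
by rewrite IH big_cons setUA andbA.
Qed.

Lemma nbhd_sdr_setU1 (S : {set T}) (f : T -> T) w x :
  {in S, forall v, e v (f v)} -> {in S &, injective f} ->
  e w x -> {in S, forall v, f v != x} -> nbhd_sdr (w |: S).
Proof.
move=> f_edge f_inj ewx f_x; apply/nbhd_sdrP.
exists (fun v => if v == w then x else f v); split.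
  by move=> v /setU1P[->|vS]; rewrite ?eqxx //; case: eqP => [->|_] //; apply: f_edge.
move=> u v /setU1P[->|uS] /setU1P[->|vS] //; rewrite ?eqxx.
- by case: eqP => [//|_ /esym/eqP]; rewrite (negbTE (f_x v vS)).
- by case: eqP => [//|_ /eqP]; rewrite (negbTE (f_x u uS)).
case: (eqVneq u w) => [->|_]; case: (eqVneq v w) => [->|_] //.
- by move/esym/eqP; rewrite (negbTE (f_x v vS)).
- by move/eqP; rewrite (negbTE (f_x u uS)).
- exact: f_inj.
Qed.

Hypotheses (e_sym : symmetric e) (e_irrefl : irreflexive e) (e_forest : forest e).

Lemma sdr_private_vertex (S : {set T}) (f : T -> T) :
  {in S, forall v, e v (f v)} -> {in S &, injective f} -> S != set0 ->
  exists2 v, v \in S & {in S, forall w, w != v -> ~~ e w (f v)}.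
Proof.
move=> f_edge f_inj /set0Pn[v0 v0S].
have [/exists_inP[v vS /forall_inP priv] | /exists_inPn shared] :=
  boolP [exists v in S, [forall w in S, (w != v) ==> ~~ e w (f v)]].
  by exists v => // w wS; apply/implyP/priv.
pose P a b := (a \in S) && (b == f a) || [&& b \in S, a != f b & e a b].
have P_sub : subrel P e.
  by move=> a b /orP[/andP[aS /eqP->]|/and3P[_ _ ->]] //; apply: f_edge.
have P_ext a b : P a b -> exists c, [&& e b c, c != a & P b c].
  case/orP=> [/andP[aS /eqP->]|/and3P[bS ab eab]].
    have /forall_inPn[w wS] := shared a aS; rewrite negb_imply negbK => /andP[wa ew].
    exists w; rewrite /P wS -[e (f a) w]e_sym ew wa /= andbT.
    by apply/orP; right; apply: contraNneq wa => /(f_inj _ _ aS wS)->.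
  by exists (f b); rewrite f_edge // eq_sym ab /P bS eqxx.
have /negP[] := forest_no_nonbacktracking_rel e_irrefl e_forest P_sub P_ext v0 (f v0).
by rewrite /P v0S eqxx.
Qed.

Lemma nbhd_sdr_ons (S : {set T}) : nbhd_sdr S -> exists s, ons e s /\ [set x in s] = S.
Proof.
have [n] := ubnP #|S|; elim: n S => // n IH S /ltnSE S_le sdrS.
have [-> | S_n0] := eqVneq S set0.
  by exists [::]; split=> //; apply/setP => x; rewrite !inE.
have /nbhd_sdrP[f [f_edge f_inj]] := sdrS.
have [v vS v_priv] := sdr_private_vertex f_edge f_inj S_n0.
have sdrSv : nbhd_sdr (S :\ v).
  apply/nbhd_sdrP; exists f; split=> [w /setD1P[_ /f_edge] // | w u].
  by move=> /setD1P[_ wS] /setD1P[_ uS]; apply: f_inj.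
have [|s [/andP[s_uniq s_ons] def_s]] := IH (S :\ v) _ sdrSv.
  by rewrite (cardsD1 v S) vS add1n in S_le.
have vs : v \notin s by have := setD11 v S; rewrite -def_s inE => ->.
exists (rcons s v); split.
  rewrite /ons rcons_uniq vs s_uniq ons_from_rcons s_ons set0U.
  apply/set0Pn; exists (f v); rewrite in_setD in_nbhd f_edge // andbT bigcup_seq.
  apply/bigcupP => -[u us]; rewrite in_nbhd.
  have /setD1P[uv uS] : u \in S :\ v by rewrite -def_s inE.
  by apply/negP/v_priv.
apply/setP => x; rewrite inE mem_rcons in_cons; case: eqP => [->|xv] //=.
by have := in_setD1 x S v; rewrite -def_s inE => ->; case: eqP xv.
Qed.

End NeighbourhoodSDR.

Section GrundyTotalDomination.
Variables (T : finType) (e : rel T).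

Lemma ons_card s : ons e s -> #|[set x in s]| = size s.
Proof. by case/andP => s_uniq _; rewrite cardsE; apply/card_uniqP. Qed.

Lemma ons_size_le_gtd s : ons e s -> size s <= gtd e.
Proof.
move=> s_ons; have s_lt : size s < #|T|.+1.
  by rewrite ltnS -(ons_card s_ons) max_card.
apply: (@leq_bigmax_cond _ _ (fun k : 'I_#|T|.+1 => val k) (Ordinal s_lt)).
by apply/existsP; exists (in_tuple s).
Qed.

Lemma gtd_attained : exists2 s, ons e s & size s = gtd e.
Proof.
have ons_nil : [exists t : 0.-tuple T, ons e t] by apply/existsP; exists [tuple].
rewrite /gtd (bigmax_eq_arg (ord0 : 'I_#|T|.+1) ons_nil).
by case: arg_maxnP => // k /existsP[t t_ons] _; exists t; rewrite ?size_tuple.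
Qed.

Lemma gtd_set_card A : gtd_set e A -> #|A| = gtd e.
Proof. by case=> s [s_ons <- ->]; apply: ons_card. Qed.

Lemma gtd_le_card : gtd e <= #|T|.
Proof. by have [s s_ons <-] := gtd_attained; rewrite -(ons_card s_ons) max_card. Qed.

Lemma gtd_set_full A : gtd e = #|T| -> gtd_set e A -> A = setT.
Proof.
move=> gtd_full /gtd_set_card A_card.
by apply/eqP; rewrite eqEcard subsetT cardsT A_card gtd_full leqnn.
Qed.

Definition leaf v := #|nbhd e v| == 1.

Lemma aut_leaf (phi : {perm T}) v : graph_aut e phi -> leaf (phi v) = leaf v.
Proof.
move=> phi_aut; rewrite /leaf; have -> : nbhd e v = phi @^-1: nbhd e (phi v).
  by apply/setP => u; rewrite !inE phi_aut.
by rewrite card_preimset //; apply: perm_inj.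
Qed.

End GrundyTotalDomination.

Section MaximumSDR.
Variables (T : finType) (e : rel T).
Hypotheses (e_sym : symmetric e) (e_irrefl : irreflexive e) (e_forest : forest e).

Definition max_sdr (S : {set T}) : bool := nbhd_sdr e S && (#|S| == gtd e).

Lemma nbhd_sdr_card_le_gtd (S : {set T}) : nbhd_sdr e S -> #|S| <= gtd e.
Proof.
case/(nbhd_sdr_ons e_sym e_irrefl e_forest) => s [s_ons <-].
by rewrite (ons_card s_ons) ons_size_le_gtd.
Qed.

Lemma gtd_setP (A : {set T}) : gtd_set e A <-> max_sdr A.
Proof.
split=> [A_gtd | /andP[A_sdr /eqP A_card]].
  have [s [s_ons _ def_A]] := A_gtd.
  by rewrite /max_sdr (gtd_set_card A_gtd) eqxx def_A ons_nbhd_sdr.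
have [s [s_ons def_A]] := nbhd_sdr_ons e_sym e_irrefl e_forest A_sdr.
by exists s; rewrite -A_card -def_A (ons_card s_ons).
Qed.

Lemma max_sdr_exists : exists S, max_sdr S.
Proof.
have [s s_ons s_size] := gtd_attained e.
by exists [set x in s]; apply/gtd_setP; exists s.
Qed.

Lemma max_sdr_exchange (S : {set T}) w x : max_sdr S -> w \notin S -> e w x ->
  exists2 y, y \in S & e y x /\ max_sdr (w |: (S :\ y)).
Proof.
case/andP => /nbhd_sdrP[f [f_edge f_inj]] /eqP S_card wS ewx.
have [/exists_inP[y yS /eqP fy] | /exists_inPn x_new] := boolP [exists y in S, f y == x].
  have S'_sub := subsetP (subD1set S y).
  exists y => //; split; first by rewrite -fy f_edge.
  rewrite /max_sdr (nbhd_sdr_setU1 (sub_in1 S'_sub f_edge) (sub_in2 S'_sub f_inj) ewx).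
    by rewrite cardsU1 in_setD1 (negbTE wS) andbF -S_card (cardsD1 y S) yS /=.
  move=> v /setD1P[vy vS]; rewrite -fy; apply: contra vy => /eqP/f_inj-> //.
have /nbhd_sdr_card_le_gtd := nbhd_sdr_setU1 f_edge f_inj ewx x_new.
by rewrite cardsU1 wS S_card ltnn.
Qed.

Hypothesis e_twin_free : no_open_twins e.

Lemma max_sdr_with_all_leaves : exists2 S, max_sdr S & forall l, leaf e l -> l \in S.
Proof.
have [S0 S0_max] := max_sdr_exists.
have [S S_max S_best] := arg_maxnP (fun S : {set T} => #|[set v in S | leaf e v]|) S0_max.
exists S => // l l_leaf; apply: contraT => lS.
have /cards1P[s Nl] := l_leaf.
have els : e l s by rewrite -in_nbhd Nl set11.
have [y yS [eys S'_max]] := max_sdr_exchange S_max lS els.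
have y_nonleaf : ~~ leaf e y.
  apply: contraNN lS => /cards1P[s' Ny].
  have s's : s = s' by apply/set1P; rewrite -Ny in_nbhd.
  by rewrite (e_twin_free (_ : nbhd e l = nbhd e y)) // Nl Ny s's.
have /proper_card : [set v in S | leaf e v] \proper [set v in l |: (S :\ y) | leaf e v].
  apply/properP; split; last by exists l; rewrite !inE ?eqxx ?l_leaf ?(negbTE lS).
  apply/subsetP => v; rewrite !inE => /andP[vS v_leaf].
  by rewrite vS v_leaf !andbT orbC; apply/orP; left; apply: contraNneq y_nonleaf => <-.
by move=> worse; have := leq_trans worse (S_best _ S'_max); rewrite ltnn.
Qed.

Hypothesis e_no_isolated : no_isolated e.

Lemma max_sdr_missing_leaf :
  gtd e < #|T| -> exists S l, [/\ max_sdr S, leaf e l & l \notin S].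
Proof.
move=> gtd_lt.
have [/existsP[S /andP[S_max /existsP[l /andP[l_leaf lS]]]] | /existsPn all_leaves] :=
  boolP [exists S, max_sdr S && [exists l, leaf e l && (l \notin S)]].
  by exists S, l.
have missed_nonleaf S v : max_sdr S -> v \notin S -> ~~ leaf e v.
  move=> S_max vS; apply: contra (all_leaves S) => v_leaf.
  by rewrite S_max; apply/existsP; exists v; rewrite v_leaf.
pose missed v := [exists S, max_sdr S && (v \notin S)].
pose P a b := e a b && (missed a || missed b).
have P_sub : subrel P e by move=> a b /andP[].
have P_ext a b : P a b -> exists c, [&& e b c, c != a & P b c].
  case/andP => eab /orP[/existsP[S /andP[S_max aS]] | /existsP[S /andP[S_max bS]]].
    have [y yS [eyb S'_max]] := max_sdr_exchange S_max aS eab.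
    have ya : y != a by apply: contraNneq aS => <-.
    exists y; rewrite /P -[e b y]e_sym eyb ya /=; apply/orP; right.
    by apply/existsP; exists (a |: (S :\ y)); rewrite S'_max !inE eqxx negb_or ya.
  have /set0Pn[c] : nbhd e b :\ a != set0.
    have := missed_nonleaf S b S_max bS.
    by rewrite -card_gt0 /leaf (cardsD1 a) in_nbhd -[e b a]e_sym eab add1n eqSS lt0n.
  rewrite in_setD1 in_nbhd => /andP[ca ebc].
  exists c; rewrite /P ebc ca /=; apply/orP; left.
  by apply/existsP; exists S; rewrite S_max bS.
have [S0 S0_max] := max_sdr_exists.
have [w wS0] : exists w, w \notin S0.
  apply/existsP; apply: contraTT gtd_lt => /existsPn S0_full.
  rewrite -leqNgt -(eqP (andP S0_max).2) -cardsT subset_leq_card //.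
  by apply/subsetP => v _; apply/negbNE/S0_full.
have [x ewx] := e_no_isolated w.
have /negP[] := forest_no_nonbacktracking_rel e_irrefl e_forest P_sub P_ext w x.
by rewrite /P ewx; apply/orP; left; apply/existsP; exists S0; rewrite S0_max.
Qed.

End MaximumSDR.

Unset Implicit Arguments.

Theorem theorem5p6 (T : finType) (e : rel T) :
  symmetric e -> irreflexive e ->
  forest e -> no_isolated e -> no_open_twins e ->
  iso_unique e <-> gtd e = #|T|.
Proof.
move=> e_sym e_irrefl e_forest e_no_isolated e_twin_free.
split=> [iso | gtd_full]; last first.
  move=> A B /(gtd_set_full gtd_full)-> /(gtd_set_full gtd_full)->.
  exists 1%g; split=> [x y | ]; first by rewrite !perm1.
  by apply/setP => x; rewrite inE; apply/imsetP; exists x; rewrite ?perm1.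
apply/eqP; rewrite eqn_leq gtd_le_card leqNgt; apply/negP => gtd_lt.
have [A A_max A_leaves] := max_sdr_with_all_leaves e_sym e_irrefl e_forest e_twin_free.
have [B [l [B_max l_leaf lB]]] :=
  max_sdr_missing_leaf e_sym e_irrefl e_forest e_no_isolated gtd_lt.
have [phi [phi_aut phiAB]] :=
  iso A B (proj2 (gtd_setP e_sym e_irrefl e_forest A) A_max)
          (proj2 (gtd_setP e_sym e_irrefl e_forest B) B_max).
have /(imset_f phi) : (phi^-1)%g l \in A.
  by apply: A_leaves; rewrite -(aut_leaf _ phi_aut) permKV.
by rewrite phiAB permKV (negbTE lB).
Qed.
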